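(* Let $(X,d)$ be a metric space, $\emptyset\neq F\subseteq X$, and let $G,H:\mathbb{R}_+\to\mathbb{R}_+$ satisfy property (G) and property (H). Let $(x_n)$ be a sequence in $X$ which is $(G,H)$-Fej\'er monotone w.r.t. $F$. (i) If $\{x_n\mid n\in\mathbb{N}\}$ has an adherent point (a point of its closure) $\hat x\in F$, then $(x_n)$ converges to $\hat x$. (ii) If moreover $H$ has the property that for every sequence $(a_n)$ in $\mathbb{R}_+$ with $(H(a_n))$ bounded, $(a_n)$ is bounded, then $(x_n)$ is bounded.
   Context: $\mathbb{R}_+$ denotes the nonnegative reals. Property (G): for every sequence $(a_n)$ in $\mathbb{R}_+$, $a_n\to 0$ implies $G(a_n)\to0$. Property (H): for every sequence $(a_n)$ in $\mathbb{R}_+$, $H(a_n)\to0$ implies $a_n\to0$. $(x_n)$ is $(G,H)$-Fej\'er monotone w.r.t. $F$ if $H(d(x_{n+m},p))\le G(d(x_n,p))$ for all $n,m\in\mathbb{N}$ and all $p\in F$. *)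

From Stdlib Require Import Reals Lra.
Open Scope R_scope.

Definition is_metric {X : Type} (d : X -> X -> R) : Prop :=
  (forall x y, 0 <= d x y) /\
  (forall x y, d x y = 0 <-> x = y) /\
  (forall x y, d x y = d y x) /\
  (forall x y z, d x z <= d x y + d y z).

Definition property_G (G : R -> R) : Prop :=
  forall a : nat -> R, (forall n, 0 <= a n) -> Un_cv a 0 -> Un_cv (fun n => G (a n)) 0.

Definition property_H (H : R -> R) : Prop :=
  forall a : nat -> R, (forall n, 0 <= a n) -> Un_cv (fun n => H (a n)) 0 -> Un_cv a 0.

Definition property_Hbdd (H : R -> R) : Prop :=
  forall a : nat -> R, (forall n, 0 <= a n) ->
    (exists M, forall n, Rabs (H (a n)) <= M) -> (exists M, forall n, Rabs (a n) <= M).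

Definition maps_nonneg (f : R -> R) : Prop := forall t, 0 <= t -> 0 <= f t.

Definition GH_fejer {X : Type} (d : X -> X -> R) (G H : R -> R)
  (F : X -> Prop) (x : nat -> X) : Prop :=
  forall n m p, F p -> H (d (x (n + m)%nat) p) <= G (d (x n) p).

Definition adherent {X : Type} (d : X -> X -> R) (x : nat -> X) (xh : X) : Prop :=
  forall eps, 0 < eps -> exists n, d (x n) xh < eps.

Definition converges_to {X : Type} (d : X -> X -> R) (x : nat -> X) (l : X) : Prop :=
  forall eps, 0 < eps -> exists N, forall n, (N <= n)%nat -> d (x n) l < eps.

Definition bounded_seq {X : Type} (d : X -> X -> R) (x : nat -> X) : Prop :=
  exists (p : X) (M : R), forall n, d (x n) p <= M.

(* If x_m stays at distance >= eps from the adherent point xh of F along arbitrarily late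
   indices, pick indices n_k with d(x_{n_k}, xh) -> 0 and later indices m_k >= n_k with
   d(x_{m_k}, xh) >= eps.  Fejér monotonicity gives H(d(x_{m_k}, xh)) <= G(d(x_{n_k}, xh)),
   which tends to 0 by (G); by (H) then d(x_{m_k}, xh) -> 0, a contradiction.  For
   boundedness, H(d(x_n, p)) <= G(d(x_0, p)) for any p in F. *)
From Stdlib Require Import Reals ZArith Lra Lia Classical ClassicalEpsilon.
Open Scope R_scope.

Lemma Un_cv_lt_inv_S (a : nat -> R) :
  (forall k, 0 <= a k) -> (forall k, a k < / INR (S k)) -> Un_cv a 0.
Proof.
  intros a_ge0 a_lt eps eps_gt0.
  destruct (archimed (/ eps)) as [up_gt _].
  assert (up_ge0 : (0 <= up (/ eps))%Z).
  { apply le_IZR. assert (0 < / eps) by (apply Rinv_0_lt_compat; lra). lra. }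
  exists (Z.to_nat (up (/ eps))). intros n Hn.
  unfold R_dist. rewrite Rminus_0_r, Rabs_right by (apply Rle_ge, a_ge0).
  apply Rlt_trans with (/ INR (S n)); [apply a_lt|].
  rewrite <- (Rinv_inv eps).
  apply Rinv_lt_contravar.
  - apply Rmult_lt_0_compat; [apply Rinv_0_lt_compat; lra | apply lt_0_INR; lia].
  - apply Rlt_le_trans with (IZR (up (/ eps))); [exact up_gt|].
    rewrite <- (Z2Nat.id _ up_ge0), <- INR_IZR_INZ, S_INR.
    apply le_INR in Hn. lra.
Qed.

Lemma Un_cv_squeeze_0 (a b : nat -> R) :
  (forall k, 0 <= b k <= a k) -> Un_cv a 0 -> Un_cv b 0.
Proof.
  intros b_between a_cv eps eps_gt0.
  destruct (a_cv eps eps_gt0) as [N HN]. exists N. intros k Hk.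
  specialize (HN k Hk). specialize (b_between k). unfold R_dist in *.
  rewrite Rminus_0_r in *. rewrite Rabs_right in * by lra. lra.
Qed.

Section Metric.

Variables (X : Type) (d : X -> X -> R).
Hypothesis d_ge0 : forall y z, 0 <= d y z.

Lemma adherent_subseq_cv (x : nat -> X) (xh : X) :
  adherent d x xh -> exists n : nat -> nat, Un_cv (fun k => d (x (n k)) xh) 0.
Proof.
  intro adh.
  assert (close : forall k : nat, {n : nat | d (x n) xh < / INR (S k)}).
  { intro k. apply constructive_indefinite_description, adh.
    apply Rinv_0_lt_compat, lt_0_INR; lia. }
  exists (fun k => proj1_sig (close k)).
  apply Un_cv_lt_inv_S; [intro; apply d_ge0 | intro k; exact (proj2_sig (close k))].
Qed.

Lemma not_converges_to_frequently_far (x : nat -> X) (l : X) :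
  ~ converges_to d x l ->
  exists eps, 0 < eps /\ forall N, exists m, (N <= m)%nat /\ eps <= d (x m) l.
Proof.
  intro not_cv. apply NNPP; intro no_eps. apply not_cv. intros eps eps_gt0.
  apply NNPP; intro no_N. apply no_eps. exists eps. split; [exact eps_gt0|].
  intro N. apply NNPP; intro no_m. apply no_N. exists N. intros n Hn.
  apply Rnot_le_lt. intro far. apply no_m. exists n. auto.
Qed.

Variables (G H : R -> R) (F : X -> Prop) (x : nat -> X).
Hypotheses (H_ge0 : maps_nonneg H) (fejer : GH_fejer d G H F x).

Lemma GH_fejer_le (p : X) (n m : nat) :
  F p -> (n <= m)%nat -> H (d (x m) p) <= G (d (x n) p).
Proof.
  intros Fp le_nm. replace m with (n + (m - n))%nat by lia. exact (fejer _ _ _ Fp).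
Qed.

Lemma GH_fejer_later_cv (p : X) (n m : nat -> nat) :
  property_G G -> property_H H -> F p -> (forall k, (n k <= m k)%nat) ->
  Un_cv (fun k => d (x (n k)) p) 0 -> Un_cv (fun k => d (x (m k)) p) 0.
Proof.
  intros PG PH Fp le_nm cv_n.
  apply PH; [intro; apply d_ge0|].
  apply Un_cv_squeeze_0 with (fun k => G (d (x (n k)) p)).
  - intro k. split; [apply H_ge0, d_ge0 | exact (GH_fejer_le _ _ _ Fp (le_nm k))].
  - exact (PG _ (fun k => d_ge0 _ _) cv_n).
Qed.

Lemma GH_fejer_adherent_converges (xh : X) :
  property_G G -> property_H H -> F xh -> adherent d x xh -> converges_to d x xh.
Proof.
  intros PG PH Fxh adh. apply NNPP; intro not_cv.
  destruct (not_converges_to_frequently_far _ _ not_cv) as [eps [eps_gt0 far]].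
  destruct (adherent_subseq_cv _ _ adh) as [n cv_n].
  assert (later : forall k, {m | (n k <= m)%nat /\ eps <= d (x m) xh}).
  { intro k. apply constructive_indefinite_description, far. }
  set (m := fun k => proj1_sig (later k)).
  assert (cv_m : Un_cv (fun k => d (x (m k)) xh) 0).
  { apply (GH_fejer_later_cv _ n m PG PH Fxh); [|exact cv_n].
    intro k. exact (proj1 (proj2_sig (later k))). }
  destruct (cv_m eps eps_gt0) as [N HN]. specialize (HN N (le_n N)).
  unfold R_dist in HN. rewrite Rminus_0_r, Rabs_right in HN by (apply Rle_ge, d_ge0).
  pose proof (proj2 (proj2_sig (later N))). unfold m in HN. lra.
Qed.

Lemma GH_fejer_bounded (p : X) :
  property_Hbdd H -> F p -> bounded_seq d x.
Proof.
  intros PHbdd Fp.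
  destruct (PHbdd (fun k => d (x k) p) (fun k => d_ge0 _ _)) as [M HM].
  - exists (G (d (x 0%nat) p)). intro k.
    rewrite Rabs_right by (apply Rle_ge, H_ge0, d_ge0).
    apply GH_fejer_le; [exact Fp | lia].
  - exists p, M. intro k. specialize (HM k).
    rewrite Rabs_right in HM by (apply Rle_ge, d_ge0). exact HM.
Qed.

End Metric.

Theorem lemma4p2 (X : Type) (d : X -> X -> R) (F : X -> Prop) (G H : R -> R)
  (x : nat -> X) :
  is_metric d ->
  (exists p, F p) ->
  maps_nonneg G -> maps_nonneg H ->
  property_G G -> property_H H ->
  GH_fejer d G H F x ->
  (forall xh, F xh -> adherent d x xh -> converges_to d x xh) /\
  (property_Hbdd H -> bounded_seq d x).
Proof.
  intros [d_ge0 _] [p Fp] _ H_ge0 PG PH fejer. split.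
  - intros xh Fxh. exact (GH_fejer_adherent_converges _ _ d_ge0 _ _ _ _ H_ge0 fejer _ PG PH Fxh).
  - intro PHbdd. exact (GH_fejer_bounded _ _ d_ge0 _ _ _ _ H_ge0 fejer _ PHbdd Fp).
Qed.
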